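(* Let $\Bbbk$ be a field, $V$ a finite-dimensional $\Bbbk$-vector space and $R$ a Hecke symmetry on $V$ with parameter $q$. Assume $\dim\Upsilon^{(n)}=1$ and $\Upsilon^{(n+1)}=0$ for some $n>0$, and fix $0\neq t\in\Upsilon^{(n)}$. Then there are linear operators $\theta,\bar\theta\in GL(V)$ such that $$R_n^{(n+1)}R_{n-1}^{(n+1)}\cdots R_1^{(n+1)}(vt)=t\,\theta(v),\qquad R_1^{(n+1)}R_2^{(n+1)}\cdots R_n^{(n+1)}(tv)=\bar\theta(v)\,t$$ for all $v\in V$. Moreover, $\bar\theta=q^{n+1}\theta^{-1}$.
   Context: A Hecke symmetry on $V$ with parameter $0\neq q\in\Bbbk$ is a linear map $R:V\otimes V\to V\otimes V$ satisfying $(R\otimes\mathrm{Id}_V)(\mathrm{Id}_V\otimes R)(R\otimes\mathrm{Id}_V)=(\mathrm{Id}_V\otimes R)(R\otimes\mathrm{Id}_V)(\mathrm{Id}_V\otimes R)$ and $(R-q\,\mathrm{Id})(R+\mathrm{Id})=0$ ($q=-1$ allowed). In the tensor algebra products are written $ab=a\otimes b$. For $p\ge2$, $1\le i\le p-1$, $R_i^{(p)}=\mathrm{Id}_V^{\otimes(i-1)}\otimes R\otimes\mathrm{Id}_V^{\otimes(p-i-1)}$ on $V^{\otimes p}$. $\Upsilon^{(0)}=\Bbbk$, $\Upsilon^{(1)}=V$, $\Upsilon^{(p)}=\bigcap_{i=1}^{p-1}(R_i^{(p)}-q\,\mathrm{Id})V^{\otimes p}$ for $p\ge2$. *)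

From HB Require Import structures.
From mathcomp Require Import all_boot all_order all_algebra.
Set Implicit Arguments. Unset Strict Implicit. Unset Printing Implicit Defensive.
Import Order.TTheory GRing.Theory Num.Theory.
Local Open Scope ring_scope.

Section Tensors.
Variables (K : fieldType) (d : nat).

Definition vecV := {ffun 'I_d -> K^o}.

(* multi-indices of length p and V^{(x)p}: a tensor is the family of its
   coordinates on the basis e_{x_0} (x) ... (x) e_{x_{p-1}}. *)
Definition midx (p : nat) := {ffun 'I_p -> 'I_d}.
Definition tens (p : nat) := {ffun midx p -> K^o}.

Definition pair2 (a b : 'I_d) : midx 2 :=
  [ffun k : 'I_2 => if k == ord0 then a else b].
Definition e2 (a b : 'I_d) : tens 2 := [ffun z => ((z == pair2 a b)%:R : K)].

Lemma succ_lt_pred (p : nat) (i : 'I_p.-1) : (i.+1 < p)%N.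
Proof. case: p i => [|p] [i Hi] //=. Qed.

(* 0-based positions i and i+1 of V^{(x)p}, for i < p-1
   (the paper's R_{i+1}^{(p)} acts on the 1-based factors i+1, i+2) *)
Definition lpos p (i : 'I_p.-1) : 'I_p := Ordinal (ltnW (succ_lt_pred i)).
Definition rpos p (i : 'I_p.-1) : 'I_p := Ordinal (succ_lt_pred i).

(* R_{i+1}^{(p)} = Id^{(x)i} (x) R (x) Id^{(x)(p-i-2)}, in coordinates *)
Definition Rfun (R : 'End(tens 2)) p (i : 'I_p.-1) (f : tens p) : tens p :=
  [ffun y : midx p =>
     \sum_(x : midx p | [forall k, ((k != lpos i) && (k != rpos i)) ==> (x k == y k)])
        R (e2 (x (lpos i)) (x (rpos i))) (pair2 (y (lpos i)) (y (rpos i))) * f x].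

Definition Rop (R : 'End(tens 2)) p (i : 'I_p.-1) : 'End(tens p) := linfun (Rfun R i).

(* Upsilon^{(p)} = \bigcap_{i} (R_i^{(p)} - q Id) V^{(x)p}
   (empty intersection = whole space, giving Upsilon^{(0)} = k, Upsilon^{(1)} = V) *)
Definition Ups (R : 'End(tens 2)) (q : K) p : {vspace tens p} :=
  (\bigcap_(i < p.-1) limg (Rop R i - q *: \1%VF))%VS.

Definition braid (R : 'End(tens 2)) : Prop :=
  forall f : tens 3,
    @Rop R 3 (0 : 'I_2) (@Rop R 3 (1 : 'I_2) (@Rop R 3 (0 : 'I_2) f))
    = @Rop R 3 (1 : 'I_2) (@Rop R 3 (0 : 'I_2) (@Rop R 3 (1 : 'I_2) f)).
Definition hecke_rel (R : 'End(tens 2)) (q : K) : Prop :=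
  forall f : tens 2, R (R f + f) - q *: (R f + f) = 0.
Definition hecke_symmetry (R : 'End(tens 2)) (q : K) : Prop :=
  q != 0 /\ braid R /\ hecke_rel R q.

Definition lmul n (v : vecV) (t : tens n) : tens n.+1 :=
  [ffun x : midx n.+1 => v (x ord0) * t [ffun k : 'I_n => x (lift ord0 k)]].
Definition rmul n (t : tens n) (v : vecV) : tens n.+1 :=
  [ffun x : midx n.+1 => t [ffun k : 'I_n => x (widen_ord (leqnSn n) k)] * v (x ord_max)].

(* R_n^{(n+1)} ... R_1^{(n+1)} w  and  R_1^{(n+1)} ... R_n^{(n+1)} w *)
Definition Rdown (R : 'End(tens 2)) n (w : tens n.+1) : tens n.+1 :=
  foldr (fun i : 'I_n => @Rop R n.+1 i) w (rev (enum 'I_n)).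
Definition Rup (R : 'End(tens 2)) n (w : tens n.+1) : tens n.+1 :=
  foldr (fun i : 'I_n => @Rop R n.+1 i) w (enum 'I_n).

End Tensors.

From HB Require Import structures.
From mathcomp Require Import all_boot all_order all_algebra.
From mathcomp Require Import zify ring.
Import Order.TTheory GRing.Theory Num.Theory.
Set Implicit Arguments. Unset Strict Implicit. Unset Printing Implicit Defensive.
Local Open Scope ring_scope.

(* Write R_i for the copy of R acting on the factors i, i+1, and put w = v t and
   A_k = R_k ... R_1 w.  Since t lies in Upsilon^(n), w lies in the image of R_j - q
   for 2 <= j <= n, and the braid relations give
   R_i (R_k ... R_1) = (R_k ... R_1) R_(i+1) for i < k.
   Hence A_n lies in the image of every R_i - q with i < n, so each slice of A_n with
   its last index frozen lies in Upsilon^(n) = k t: this is A_n = t theta(v), and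
   symmetrically R_1 ... R_n (t v) = thetabar(v) t.  The alternating sum
   S = sum_k (-1)^k q^(n-k) A_k lies in the image of every R_i - q, the terms k = i-1
   and k = i combining into a multiple of (R_i - q) A_(i-1); so S lies in
   Upsilon^(n+1) = 0.  Finally the Hecke relation gives
   R_1 ... R_n A_n + (q - 1) S = q^(n+1) w, i.e. thetabar theta = q^(n+1). *)

Section Coordinates.
Variables (K : fieldType) (d : nat).

Definition set_midx p (y : midx d p) (k : 'I_p) (a : 'I_d) : midx d p :=
  [ffun j => if j == k then a else y j].

Lemma set_midxE p (y : midx d p) k a j :
  set_midx y k a j = if j == k then a else y j.
Proof. by rewrite ffunE. Qed.

Lemma set_midx_other p (y : midx d p) k a j : j != k -> set_midx y k a j = y j.
Proof. by move=> /negbTE jk; rewrite set_midxE jk. Qed.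

Lemma set_midxC p (y : midx d p) k k' a b : k != k' ->
  set_midx (set_midx y k a) k' b = set_midx (set_midx y k' b) k a.
Proof.
move=> kk'; apply/ffunP=> j; rewrite !set_midxE.
by case: (j =P k) => [->|//]; rewrite (negbTE kk').
Qed.

Lemma lpos_neq_rpos p (i : 'I_p.-1) : lpos i != rpos i.
Proof. by rewrite -val_eqE /= neq_ltn ltnSn. Qed.

Lemma pair2_eq (z : midx d 2) a b :
  (z == pair2 a b) = (z ord0 == a) && (z ord_max == b).
Proof.
apply/eqP/andP => [->|[/eqP <- /eqP <-]]; first by rewrite !ffunE.
apply/ffunP=> k; rewrite ffunE; case: ifP => [/eqP -> //|k0].
by congr (z _); apply/val_inj; case: k k0 => [[|[|k]] Hk].
Qed.

Lemma pair2_eta (z : midx d 2) : pair2 (z ord0) (z ord_max) = z.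
Proof. by apply/esym/eqP; rewrite pair2_eq !eqxx. Qed.

Lemma tens2_expand (g : tens K d 2) :
  g = \sum_(ab : 'I_d * 'I_d) g (pair2 ab.1 ab.2) *: e2 K ab.1 ab.2.
Proof.
apply/ffunP=> z; rewrite sum_ffunE (bigD1 (z ord0, z ord_max)) //=.
rewrite big1 => [|[a b] /= abz].
  by rewrite !ffunE pair2_eta eqxx addr0; exact/esym/mulr1.
rewrite !ffunE pair2_eq; move: abz; rewrite xpair_eqE (eq_sym a) (eq_sym b) => /negbTE ->.
exact: mulr0.
Qed.

Variable R : 'End(tens K d 2).

Lemma Rfun_is_linear p (i : 'I_p.-1) : linear (Rfun R i).
Proof.
move=> a f g; apply/ffunP=> y; rewrite !ffunE scaler_sumr -big_split /=.
by apply: eq_bigr => x _; rewrite !ffunE mulrDr mulrCA.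
Qed.

HB.instance Definition _ p (i : 'I_p.-1) :=
  GRing.isLinear.Build K (tens K d p) (tens K d p) *:%R (Rfun R i) (Rfun_is_linear i).

Lemma RopE p (i : 'I_p.-1) f y : Rop R i f y =
  \sum_(ab : 'I_d * 'I_d) R (e2 K ab.1 ab.2) (pair2 (y (lpos i)) (y (rpos i)))
                * f (set_midx (set_midx y (lpos i) ab.1) (rpos i) ab.2).
Proof.
rewrite lfunE ffunE.
set l := lpos i; set r := rpos i.
have lr : l != r := lpos_neq_rpos i.
pose upd2 (ab : 'I_d * 'I_d) := set_midx (set_midx y l ab.1) r ab.2.
have upd2_l ab : upd2 ab l = ab.1 by rewrite set_midx_other // set_midxE eqxx.
have upd2_r ab : upd2 ab r = ab.2 by rewrite set_midxE eqxx.
rewrite (reindex_onto upd2 (fun x : midx d p => (x l, x r))) /=.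
  apply: eq_big => [[a b]|[a b] _]; rewrite /= upd2_l upd2_r //.
  rewrite !eqxx andbT; apply/forallP=> k; apply/implyP=> /andP[kl kr].
  by rewrite !set_midx_other.
move=> x /forallP x_off; apply/ffunP=> k; rewrite !set_midxE.
case: eqP => [->//|/eqP kr]; case: eqP => [->//|/eqP kl].
by apply/esym/eqP; apply: (implyP (x_off k)); rewrite kl kr.
Qed.

Lemma Rop_ord0 (g : tens K d 2) : Rop R (p := 2) ord0 g = R g.
Proof.
have [l0 r1] : lpos (p := 2) ord0 = ord0 /\ rpos (p := 2) ord0 = ord_max.
  by split; apply/val_inj.
apply/ffunP=> y; rewrite RopE {2}(tens2_expand g) l0 r1 linear_sum sum_ffunE.
apply: eq_bigr => -[a b] _ /=.
have -> : set_midx (set_midx y ord0 a) ord_max b = pair2 a b.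
  by apply/eqP; rewrite pair2_eq !set_midxE -!val_eqE /= !eqxx.
by rewrite linearZ ffunE pair2_eta mulrC.
Qed.

Lemma Rop_commute p (i j : 'I_p.-1) f : (i.+1 < j)%N ->
  Rop R i (Rop R j f) = Rop R j (Rop R i f).
Proof.
move=> ij; apply/ffunP=> y; rewrite !RopE.
have [lilj lirj rilj rirj] :
    [/\ lpos i != lpos j, lpos i != rpos j, rpos i != lpos j & rpos i != rpos j].
  by split; rewrite -val_eqE /=; lia.
have [ljli ljri rjli rjri] :
    [/\ lpos j != lpos i, lpos j != rpos i, rpos j != lpos i & rpos j != rpos i].
  by split; rewrite eq_sym.
under eq_bigr do rewrite RopE big_distrr !set_midx_other //.
under [RHS]eq_bigr do rewrite RopE big_distrr !set_midx_other //.
rewrite exchange_big; apply: eq_bigr => -[c e] _; apply: eq_bigr => -[a b] _ /=.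
by rewrite mulrCA (set_midxC _ _ _ rilj) (set_midxC _ _ _ rirj) (set_midxC _ _ _ lilj)
  (set_midxC _ _ _ lirj).
Qed.

Section Slices.
Variables (p s : nat) (e : 'I_s -> 'I_p).
Hypothesis e_inj : injective e.

Definition splice (y : midx d p) (z : midx d s) : midx d p :=
  [ffun j => if [pick o | e o == j] is Some o then z o else y j].

Definition slice (y : midx d p) (g : tens K d p) : tens K d s :=
  [ffun z => g (splice y z)].

Lemma splice_in y z o : splice y z (e o) = z o.
Proof.
by rewrite ffunE; case: pickP => [o' /eqP/e_inj -> //|/(_ o)]; rewrite eqxx.
Qed.

Lemma splice_out y z j : (forall o, e o != j) -> splice y z j = y j.
Proof. by move=> je; rewrite ffunE; case: pickP => [o eo|//]; have := je o; rewrite eo. Qed.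

Lemma image_or_outside (j : 'I_p) : (exists o, j = e o) \/ (forall o, e o != j).
Proof.
case: (pickP (fun o => e o == j)) => [o /eqP <-|je]; first by left; exists o.
by right=> o; rewrite je.
Qed.

Lemma splice_set y z o a : splice y (set_midx z o a) = set_midx (splice y z) (e o) a.
Proof.
apply/ffunP=> j; case: (image_or_outside j) => [[o' ->]|je].
  by rewrite splice_in !set_midxE splice_in (inj_eq e_inj).
by rewrite splice_out // set_midx_other ?splice_out // eq_sym.
Qed.

Lemma splice_eq (y y' : midx d p) z : (forall j, (forall o, e o != j) -> y j = y' j) ->
  splice y z = splice y' z.
Proof.
move=> yy'; apply/ffunP=> j; case: (image_or_outside j) => [[o ->]|je].
  by rewrite !splice_in.
by rewrite !splice_out // yy'.
Qed.

Lemma splice_id y : splice y [ffun o => y (e o)] = y.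
Proof.
apply/ffunP=> j; case: (image_or_outside j) => [[o ->]|je].
  by rewrite splice_in ffunE.
by rewrite splice_out.
Qed.

Lemma eq_from_slices g h : (forall y, slice y g = slice y h) -> g = h.
Proof.
move=> gh; apply/ffunP=> x.
by have /ffunP/(_ [ffun o => x (e o)]) := gh x; rewrite !ffunE splice_id.
Qed.

Lemma slice_is_linear y : linear (slice y).
Proof. by move=> a g h; apply/ffunP=> z; rewrite !ffunE. Qed.

HB.instance Definition _ y :=
  GRing.isLinear.Build K (tens K d p) (tens K d s) *:%R (slice y) (slice_is_linear y).

Lemma slice_Rop (i : 'I_p.-1) (j : 'I_s.-1) y g :
  e (lpos j) = lpos i -> e (rpos j) = rpos i ->
  slice y (Rop R i g) = Rop R j (slice y g).
Proof.
move=> el er; apply/ffunP=> z; rewrite ffunE !RopE -el -er !splice_in.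
by apply: eq_bigr => ab _; rewrite ffunE !splice_set.
Qed.

End Slices.

Definition window k s p (H : (k + s <= p)%N) (o : 'I_s) : 'I_p := widen_ord H (rshift k o).

Lemma window_inj k s p (H : (k + s <= p)%N) : injective (window H).
Proof. by move=> o o' /(congr1 val) /= /addnI /val_inj. Qed.
Arguments window_inj {k s p} H.

Lemma slice_window_Rop k s p (H : (k + s <= p)%N) (i : 'I_p.-1) (j : 'I_s.-1) y g :
  i = (k + j)%N :> nat -> slice (window H) y (Rop R i g) = Rop R j (slice (window H) y g).
Proof.
move=> ikj; apply: slice_Rop; first exact: window_inj.
all: by apply/val_inj; rewrite /= ikj ?addnS.
Qed.

Lemma hecke_quadratic q : hecke_rel R q -> forall g, R (R g) = (q - 1) *: R g + q *: g.
Proof.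
move=> hR g; have /eqP := hR g; rewrite linearD scalerDr subr_eq0 => /eqP E.
by rewrite scalerBl scale1r addrAC -E addrK.
Qed.

Lemma Rop_hecke q : hecke_rel R q -> forall p (i : 'I_p.-1) f,
  Rop R i (Rop R i f) = (q - 1) *: Rop R i f + q *: f.
Proof.
move=> hR p i f; have H : (i + 2 <= p)%N by have := ltn_ord i; lia.
apply: (eq_from_slices (window_inj H)) => y.
have slR g : slice (window H) y (Rop R i g) = Rop R (p := 2) ord0 (slice (window H) y g).
  by apply: slice_window_Rop => /=; rewrite addn0.
by rewrite linearD !linearZ /= !slR !Rop_ord0 (hecke_quadratic hR).
Qed.

Lemma Rop_braid : braid R -> forall p (i i' : 'I_p.-1) f, i' = i.+1 :> nat ->
  Rop R i (Rop R i' (Rop R i f)) = Rop R i' (Rop R i (Rop R i' f)).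
Proof.
move=> hB p i i' f ii'; have H : (i + 3 <= p)%N by have := ltn_ord i'; rewrite ii'; lia.
apply: (eq_from_slices (window_inj H)) => y.
have slR0 g : slice (window H) y (Rop R i g) = Rop R (p := 3) 0 (slice (window H) y g).
  by apply: slice_window_Rop => /=; rewrite addn0.
have slR1 g : slice (window H) y (Rop R i' g) = Rop R (p := 3) 1 (slice (window H) y g).
  by apply: slice_window_Rop => /=; rewrite ii' addn1.
by rewrite !(slR0, slR1) hB.
Qed.

End Coordinates.

Section LinearFunctions.
Variables (K : fieldType) (aT rT : vectType K) (f : aT -> rT).
Hypothesis f_lin : linear f.

HB.instance Definition _ := GRing.isLinear.Build K aT rT *:%R f f_lin.

Lemma linfunE_linear : linfun f =1 f.
Proof. exact: lfunE. Qed.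

End LinearFunctions.

Lemma limg_intertwine (K : fieldType) (U W : vectType K) (A : 'End(U)) (B : 'End(W))
    (F : {linear U -> W}) c x :
  (forall y, B (F y) = F (A y)) -> x \in limg (A - c *: \1%VF) ->
  F x \in limg (B - c *: \1%VF).
Proof.
move=> BF /memv_imgP[y _ ->]; apply/memv_imgP; exists (F y); first exact: memvf.
by rewrite !lfun_simp linearB linearZ /= BF.
Qed.

Lemma vline_coord (K : fieldType) (I : finType) (t x : {ffun I -> K^o}) z0 :
  t z0 != 0 -> x \in <[t]>%VS -> x = (x z0 / t z0) *: t.
Proof. by move=> tz0 /vlineP[c ->]; rewrite ffunE mulfK. Qed.

Section Products.
Variables (K : fieldType) (d : nat).

Definition rmulr n (v : vecV K d) (s : tens K d n) : tens K d n.+1 := rmul s v.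

Lemma lmul_is_linear n (v : vecV K d) : linear (@lmul K d n v).
Proof. by move=> a s s'; apply/ffunP=> x; rewrite !ffunE mulrDr mulrCA. Qed.

Lemma rmulr_is_linear n (v : vecV K d) : linear (@rmulr n v).
Proof. by move=> a s s'; apply/ffunP=> x; rewrite !ffunE mulrDl scalerAl. Qed.

HB.instance Definition _ n v :=
  GRing.isLinear.Build K (tens K d n) (tens K d n.+1) *:%R (lmul v) (lmul_is_linear v).
HB.instance Definition _ n v :=
  GRing.isLinear.Build K (tens K d n) (tens K d n.+1) *:%R (@rmulr n v) (rmulr_is_linear v).

Lemma lmul_linearl n (s : tens K d n) : linear (fun v : vecV K d => lmul v s).
Proof. by move=> a v v'; apply/ffunP=> x; rewrite !ffunE mulrDl scalerAl. Qed.

Lemma rmul_linearr n (s : tens K d n) : linear (fun v : vecV K d => rmul s v).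
Proof. by move=> a v v'; apply/ffunP=> x; rewrite !ffunE mulrDr scalerAr. Qed.

Lemma widen_ord_inj n : injective (@widen_ord n n.+1 (leqnSn n)).
Proof. by move=> o o' /(congr1 val) /= /val_inj. Qed.

Lemma slice_lmul n y v (s : tens K d n) :
  slice (lift ord0) y (lmul v s) = v (y ord0) *: s.
Proof.
apply/ffunP=> z; rewrite ffunE [in LHS]ffunE [in RHS]ffunE splice_out => [|o].
  by congr (_ * s _); apply/ffunP=> k; rewrite ffunE splice_in //; apply: lift_inj.
by rewrite eq_sym neq_lift.
Qed.

Lemma slice_rmul n y v (s : tens K d n) :
  slice (widen_ord (leqnSn n)) y (rmul s v) = v (y ord_max) *: s.
Proof.
apply/ffunP=> z; rewrite ffunE [in LHS]ffunE [in RHS]ffunE splice_out => [|o].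
  rewrite mulrC; congr (_ * s _); apply/ffunP=> k.
  by rewrite ffunE splice_in //; apply: widen_ord_inj.
by rewrite -val_eqE /= neq_ltn ltn_ord.
Qed.

Variable R : 'End(tens K d 2).

Lemma lmul_Rop n (i : 'I_n.-1) (i' : 'I_n) v s : i' = i.+1 :> nat ->
  Rop R (p := n.+1) i' (lmul v s) = lmul v (Rop R i s).
Proof.
move=> ii'; apply: (eq_from_slices (@lift_inj n.+1 ord0)) => y.
rewrite (slice_Rop R (@lift_inj n.+1 ord0) (i := i') (j := i)) ?slice_lmul ?linearZ //.
all: by apply/val_inj; rewrite /= /bump /= ii'.
Qed.

Lemma rmul_Rop n (i : 'I_n.-1) (i' : 'I_n) v s : i' = i :> nat ->
  Rop R (p := n.+1) i' (rmul s v) = rmul (Rop R i s) v.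
Proof.
move=> ii'; apply: (eq_from_slices (@widen_ord_inj n)) => y.
rewrite (slice_Rop R (@widen_ord_inj n) (i := i') (j := i)) ?slice_rmul ?linearZ //.
all: by apply/val_inj; rewrite /= ii'.
Qed.

End Products.

Section Factorization.
Variables (K : fieldType) (d n : nat) (t : tens K d n).
Hypothesis t_neq0 : t != 0.

Lemma factor_slices (e : 'I_n -> 'I_n.+1) (j0 : 'I_n.+1) (F : vecV K d -> tens K d n.+1) :
  injective e -> (forall j, (forall o, e o != j) -> j = j0) -> linear F ->
  (forall v y, slice e y (F v) \in <[t]>%VS) ->
  exists theta : 'End(vecV K d), forall v y, slice e y (F v) = theta v (y j0) *: t.
Proof.
move=> e_inj e_out F_lin F_slices.
have /existsP[z0 tz0] : [exists z, t z != 0].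
  apply: contraNT t_neq0 => /existsPn t0; apply/eqP/ffunP=> z.
  by rewrite ffunE; apply/eqP/negbNE/t0.
pose theta v : vecV K d := [ffun b => F v (splice e [ffun=> b] z0) / t z0].
have theta_lin : linear theta.
  move=> a v v'; apply/ffunP=> b; rewrite !ffunE F_lin !ffunE mulrDl.
  by congr (_ + _); exact/esym/mulrA.
exists (linfun theta) => v y; rewrite linfunE_linear // ffunE.
rewrite {1}(vline_coord tz0 (F_slices v y)) ffunE.
by congr ((F v _ / _) *: t); apply: (splice_eq e_inj) => j /e_out ->; rewrite ffunE.
Qed.

Lemma factor_rmul (F : vecV K d -> tens K d n.+1) : linear F ->
  (forall v y, slice (widen_ord (leqnSn n)) y (F v) \in <[t]>%VS) ->
  exists theta : 'End(vecV K d), forall v, F v = rmul t (theta v).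
Proof.
move=> F_lin F_slices.
have e_out (j : 'I_n.+1) : (forall o, widen_ord (leqnSn n) o != j) -> j = ord_max.
  move=> j_out; apply/val_inj/eqP; rewrite /= eqn_leq -ltnS ltn_ord /=.
  by rewrite leqNgt; apply/negP=> jn; have := j_out (Ordinal jn); rewrite -val_eqE /= eqxx.
have [theta Ht] := factor_slices (@widen_ord_inj n) e_out F_lin F_slices.
exists theta => v; apply: (eq_from_slices (@widen_ord_inj n)) => y.
by rewrite Ht slice_rmul.
Qed.

Lemma factor_lmul (F : vecV K d -> tens K d n.+1) : linear F ->
  (forall v y, slice (lift ord0) y (F v) \in <[t]>%VS) ->
  exists theta : 'End(vecV K d), forall v, F v = lmul (theta v) t.
Proof.
move=> F_lin F_slices.
have e_out (j : 'I_n.+1) : (forall o, lift ord0 o != j) -> j = ord0.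
  by case: (unliftP ord0 j) => [o ->|//] /(_ o); rewrite eqxx.
have [theta Ht] := factor_slices (@lift_inj n.+1 ord0) e_out F_lin F_slices.
exists theta => v; apply: (eq_from_slices (@lift_inj n.+1 ord0)) => y.
by rewrite Ht slice_lmul.
Qed.

Lemma lmul_injl : injective (fun v : vecV K d => lmul v t).
Proof.
move=> v v' vv'; apply/ffunP=> b; have /eqP := congr1 (slice (lift ord0) [ffun=> b]) vv'.
rewrite !slice_lmul !ffunE -subr_eq0 -scalerBl scaler_eq0 (negbTE t_neq0) orbF subr_eq0.
by move/eqP.
Qed.

End Factorization.

Lemma memUpsP (K : fieldType) (d : nat) (R : 'End(tens K d 2)) (q : K) p (x : tens K d p) :
  reflect (forall i : 'I_p.-1, x \in limg (Rop R i - q *: \1%VF)) (x \in Ups R q p).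
Proof.
rewrite /Ups memvE; apply: (iffP subv_bigcapP) => [x_in i|x_in i _].
  by rewrite memvE; apply: x_in.
by rewrite -memvE.
Qed.

Lemma tensP (K : fieldType) d p (f g : tens K d p) : (forall z, f z = g z :> K) -> f = g.
Proof. by move=> fg; apply/ffunP. Qed.

(* Stated in [K] rather than [K^o], so that [ring] sees a product. *)
Lemma tensZE (K : fieldType) d p a (g : tens K d p) z : (a *: g) z = a * g z :> K.
Proof. by rewrite ffunE. Qed.

Section HeckeChain.
Variables (K : fieldType) (d : nat) (R : 'End(tens K d 2)) (q : K) (m : nat).
Hypotheses (hB : braid R) (hR : hecke_rel R q).

(* [T j] is the paper's R_(j+1) on V^(n+1), with n = m + 1. *)
Definition T j : 'End(tens K d m.+2) := Rop R (p := m.+2) (inord j).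

Local Notation imT j := (limg (T j - q *: \1%VF)).

Lemma T_val (i : 'I_m.+1) : T i = Rop R (p := m.+2) i.
Proof. by rewrite /T inord_val. Qed.

Lemma imT_mem j x : T j x - q *: x \in imT j.
Proof.
by apply/memv_imgP; exists x; rewrite ?memvf // add_lfunE opp_lfunE scale_lfunE id_lfunE.
Qed.

Lemma T_hecke j f : T j (T j f) = (q - 1) *: T j f + q *: f.
Proof. exact: Rop_hecke. Qed.

Lemma T_commute j k f : (j.+1 < k)%N -> (k <= m)%N -> T j (T k f) = T k (T j f).
Proof. by move=> jk km; apply: Rop_commute; rewrite !inordK //; lia. Qed.

Lemma T_braid j f : (j < m)%N -> T j (T j.+1 (T j f)) = T j.+1 (T j (T j.+1 f)).
Proof. by move=> jm; apply: Rop_braid => //; rewrite !inordK //; lia. Qed.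

Lemma T_imT j x : x \in imT j -> T j x = - x.
Proof.
case/memv_imgP=> y _ ->; rewrite add_lfunE opp_lfunE scale_lfunE id_lfunE.
rewrite linearB linearZ /= T_hecke scalerBl scale1r addrAC (addrAC (q *: _)) subrr.
by rewrite add0r opprB addrC.
Qed.

Fixpoint Tdown k f := if k is k'.+1 then T k' (Tdown k' f) else f.
Fixpoint Tup k f := if k is k'.+1 then Tup k' (T k' f) else f.

Lemma Tdown_is_linear k : linear (Tdown k).
Proof. by elim: k => // k IH a f g /=; rewrite IH linearP. Qed.

Lemma Tup_is_linear k : linear (Tup k).
Proof. by elim: k => // k IH a f g /=; rewrite linearP IH. Qed.

HB.instance Definition _ k := GRing.isLinear.Build K (tens K d m.+2) (tens K d m.+2) *:%R
  (Tdown k) (Tdown_is_linear k).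
HB.instance Definition _ k := GRing.isLinear.Build K (tens K d m.+2) (tens K d m.+2) *:%R
  (Tup k) (Tup_is_linear k).

Lemma Rdown_Tdown w : Rdown R w = Tdown m.+1 w.
Proof.
have iota_Tdown k : foldr T w (rev (iota 0 k)) = Tdown k w.
  by elim: k => // k IH; rewrite -[k.+1]addn1 iotaD rev_cat /= IH addn1.
rewrite /Rdown -iota_Tdown -val_enum_ord -map_rev foldr_map.
by elim: (rev _) => //= i s ->; rewrite /T inord_val.
Qed.

Lemma Rup_Tup w : Rup R w = Tup m.+1 w.
Proof.
have iota_Tup k w' : foldr T w' (iota 0 k) = Tup k w'.
  by elim: k w' => // k IH w'; rewrite -[k.+1]addn1 iotaD foldr_cat /= IH addn1.
rewrite /Rup -iota_Tup -val_enum_ord foldr_map.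
by elim: (enum _) => //= i s ->; rewrite /T inord_val.
Qed.

Lemma T_Tdown k j f : (k < j)%N -> (j <= m)%N -> T j (Tdown k f) = Tdown k (T j f).
Proof.
by elim: k => //= k IH kj jm; rewrite -(T_commute _ kj jm) IH // ltnW.
Qed.

Lemma T_Tdown_shift i k f : (i.+2 <= k <= m.+1)%N ->
  T i (Tdown k f) = Tdown k (T i.+1 f).
Proof.
elim: k => // k IH /andP[ik km].
have [ik'|<-] : (i.+1 < k)%N \/ i.+1 = k by lia.
  by rewrite /= T_commute ?IH //; lia.
rewrite /= T_braid; last by lia.
by rewrite (T_Tdown f (ltnSn i)); [| lia].
Qed.

Lemma T_Tup k j f : (k < j)%N -> (j <= m)%N -> T j (Tup k f) = Tup k (T j f).
Proof.
by elim: k f => //= k IH f kj jm; rewrite IH ?(ltnW kj) // (T_commute f kj jm).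
Qed.

Lemma T_Tup_shift i k f : (i.+2 <= k <= m.+1)%N ->
  T i.+1 (Tup k f) = Tup k (T i f).
Proof.
elim: k f => // k IH f /andP[ik km].
have [ik'|<-] : (i.+1 < k)%N \/ i.+1 = k by lia.
  by rewrite /= IH ?ik' 1?ltnW //; apply: congr1; exact: (T_commute f ik').
rewrite /= (T_Tup _ (ltnSn i)); last by lia.
by rewrite T_braid; last by lia.
Qed.

Lemma imT_eq0 x : Ups R q m.+2 = 0%VS -> (forall j, (j <= m)%N -> x \in imT j) -> x = 0.
Proof.
move=> Ups0 x_in; apply/eqP; rewrite -memv0 -Ups0; apply/memUpsP => i.
by rewrite -T_val; apply: x_in; rewrite -ltnS.
Qed.

(* alt_sum k w = \sum_(j <= k) (-1)^j q^(k-j) Tdown j w *)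
Fixpoint alt_sum k w : tens K d m.+2 :=
  if k is k'.+1 then q *: alt_sum k' w + (-1) ^+ k *: Tdown k w else w.

Section AlternatingSum.
Variable w : tens K d m.+2.
Hypothesis w_img : forall j, (0 < j <= m)%N -> w \in imT j.

Lemma Tup_Tdown_sign l k : (l < k <= m.+1)%N -> Tup l (Tdown k w) = (-1) ^+ l *: Tdown k w.
Proof.
elim: l => [|l IH] /andP[lk km] /=; first by rewrite scale1r.
rewrite T_Tdown_shift; last by rewrite lk.
rewrite T_imT; last by apply: w_img; lia.
rewrite !linearN /= IH; last by rewrite ltnW.
by rewrite exprS mulN1r scaleNr.
Qed.

Lemma Tup_Tdown_alt k : (k <= m.+1)%N ->
  Tup k (Tdown k w) = q ^+ k.+1 *: w - (q - 1) *: alt_sum k w.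
Proof.
elim: k => [_|k IH km] /=.
  by apply: tensP => z; rewrite !(tensZE, ffunE); ring.
rewrite T_hecke linearD !linearZ /= (@Tup_Tdown_sign k k.+1); last by rewrite ltnSn.
rewrite IH; last exact: ltnW.
by apply: tensP => z; rewrite !(tensZE, ffunE) /= !exprS; ring.
Qed.

Lemma alt_sum_imT i : (i <= m)%N -> alt_sum m.+1 w \in imT i.
Proof.
move=> im.
have Tdown_low k : (k < i)%N -> Tdown k w \in imT i.
  move=> ki; apply: (limg_intertwine (A := T i)); first by move=> y; apply: T_Tdown.
  by apply: w_img; lia.
have Tdown_high k : (i.+2 <= k <= m.+1)%N -> Tdown k w \in imT i.
  move=> ik; apply: (limg_intertwine (A := T i.+1)); first by move=> y; apply: T_Tdown_shift.
  by apply: w_img; lia.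
have alt_low k : (k < i)%N -> alt_sum k w \in imT i.
  elim: k => [i0|k IH ki] /=; first by apply: w_img; lia.
  by apply: memvD; apply: memvZ; [apply: IH | apply: (Tdown_low k.+1)]; lia.
have alt_mid : alt_sum i.+1 w \in imT i.
  (* the terms of index i and i+1 combine into (-1)^(i+1) (T i - q) (Tdown i w) *)
  have -> : alt_sum i.+1 w = q *: (alt_sum i w - (-1) ^+ i *: Tdown i w)
                 + (-1) ^+ i.+1 *: (T i (Tdown i w) - q *: Tdown i w).
    by apply: tensP => z; rewrite /= !(tensZE, ffunE) !exprS; ring.
  rewrite memvD ?memvZ ?imT_mem //.
  case: i im alt_low {Tdown_low Tdown_high} => [|i] im alt_low.
    by rewrite /= scale1r subrr mem0v.
  by rewrite /= addrK memvZ ?alt_low.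
have alt_high k : (i < k <= m.+1)%N -> alt_sum k w \in imT i.
  elim: k => [|k IH] // /andP[ik km].
  have [<-|ik'] : i = k \/ (i < k)%N by lia.
    exact: alt_mid.
  by apply: memvD; apply: memvZ; [apply: IH | apply: (Tdown_high k.+1)]; lia.
by apply: alt_high; lia.
Qed.

Lemma Tup_Tdown : Ups R q m.+2 = 0%VS -> Tup m.+1 (Tdown m.+1 w) = q ^+ m.+2 *: w.
Proof.
move=> Ups0; rewrite Tup_Tdown_alt // (imT_eq0 Ups0 alt_sum_imT).
by rewrite scaler0 subr0.
Qed.

End AlternatingSum.

Section Generator.
Variable t : tens K d m.+1.
Hypotheses (t_neq0 : t != 0) (Ups_t : Ups R q m.+1 = <[t]>%VS).

Lemma t_in_img (i : 'I_m) : t \in limg (Rop R (p := m.+1) i - q *: \1%VF).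
Proof. by move: (memv_line t); rewrite -Ups_t => /memUpsP. Qed.

Lemma lmul_imT v j : (0 < j <= m)%N -> lmul v t \in imT j.
Proof.
case: j => // j /andP[_ jm].
apply: (limg_intertwine (A := Rop R (p := m.+1) (Ordinal jm))) (t_in_img _).
by move=> s; apply: lmul_Rop; rewrite inordK.
Qed.

Lemma rmul_imT v j : (j < m)%N -> rmul t v \in imT j.
Proof.
move=> jm.
apply: (limg_intertwine (F := rmulr v) (A := Rop R (p := m.+1) (Ordinal jm))) (t_in_img _).
by move=> s; apply: rmul_Rop; rewrite inordK // ltnW.
Qed.

Lemma slice_right_Ups g : (forall j, (j < m)%N -> g \in imT j) ->
  forall y, slice (widen_ord (leqnSn m.+1)) y g \in <[t]>%VS.
Proof.
move=> g_in y; rewrite -Ups_t; apply/memUpsP => i.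
apply: (limg_intertwine (A := T i)) (g_in i (ltn_ord i)) => h.
apply/esym/slice_Rop; first exact: widen_ord_inj.
all: by apply/val_inj; rewrite /= inordK // ltnS ltnW.
Qed.

Lemma slice_left_Ups g : (forall j, (0 < j <= m)%N -> g \in imT j) ->
  forall y, slice (lift ord0) y g \in <[t]>%VS.
Proof.
move=> g_in y; rewrite -Ups_t; apply/memUpsP => i.
apply: (limg_intertwine (A := T i.+1)) (g_in i.+1 (ltn_ord i)) => h.
apply/esym/slice_Rop; first exact: lift_inj.
all: by apply/val_inj; rewrite /= inordK // ltnS ltn_ord.
Qed.

Lemma Tdown_lmul_factor : exists theta : 'End(vecV K d),
  forall v, Tdown m.+1 (lmul v t) = rmul t (theta v).
Proof.
apply: (factor_rmul t_neq0) => [a v v'|v y]; first by rewrite lmul_linearl linearP.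
apply: slice_right_Ups => j jm.
apply: (limg_intertwine (A := T j.+1)); first by move=> h; apply: T_Tdown_shift; lia.
by apply: lmul_imT; lia.
Qed.

Lemma Tup_rmul_factor : exists theta : 'End(vecV K d),
  forall v, Tup m.+1 (rmul t v) = lmul (theta v) t.
Proof.
apply: (factor_lmul t_neq0) => [a v v'|v y]; first by rewrite rmul_linearr linearP.
apply: slice_left_Ups => -[|j] // /andP[_ jm].
apply: (limg_intertwine (A := T j)); first by move=> h; apply: T_Tup_shift; lia.
by apply: rmul_imT; lia.
Qed.

End Generator.

End HeckeChain.

Lemma lfun_scaled_inverse (K : fieldType) (vT : vectType K) (f g : 'End(vT)) c :
  c != 0 -> (forall v, g (f v) = c *: v) ->
  [/\ bijective f, bijective g & g = c *: f^-1%VF].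
Proof.
move=> c0 gf.
have f_inj : injective f.
  move=> v v' /(congr1 g); rewrite !gf => /(congr1 ( *:%R c^-1)).
  by rewrite !scalerA mulVf ?scale1r.
have fK : lker f == 0%VS by apply/lker0P.
have gE : g = c *: f^-1%VF.
  by apply/lfunP=> v; rewrite scale_lfunE -{1}(lker0_lfunVK fK v) gf.
split=> //; first by exists f^-1%VF; [exact: lker0_lfunK | exact: lker0_lfunVK].
exists (fun v => c^-1 *: f v) => v; last by rewrite linearZ /= gf scalerA mulVf ?scale1r.
by rewrite gE scale_lfunE linearZ /= lker0_lfunVK // scalerA mulVf ?scale1r.
Qed.

Theorem proposition3p1 (K : fieldType) (d : nat) (R : 'End(tens K d 2)) (q : K)
  (n : nat) (t : tens K d n) :
  hecke_symmetry R q ->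
  (0 < n)%N ->
  \dim (Ups R q n) = 1%N ->
  Ups R q n.+1 = 0%VS ->
  t != 0 -> t \in Ups R q n ->
  exists theta thetab : 'End(vecV K d),
    [/\ bijective theta, bijective thetab,
        (forall v, Rdown R (lmul v t) = rmul t (theta v)),
        (forall v, Rup R (rmul t v) = lmul (thetab v) t)
      & thetab = q ^+ n.+1 *: (theta^-1)%VF].
Proof.
case: n t => [|m] t // [q0 [hB hR]] _ dim1 Ups0 t_neq0 t_Ups.
have Ups_t : Ups R q m.+1 = <[t]>%VS.
  by apply/esym/eqP; rewrite eqEdim dim1 dim_vline t_neq0 andbT -memvE.
have [theta Htheta] := Tdown_lmul_factor hB t_neq0 Ups_t.
have [thetab Hthetab] := Tup_rmul_factor hB t_neq0 Ups_t.
have thetabK v : thetab (theta v) = q ^+ m.+2 *: v.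
  apply: (lmul_injl t_neq0); rewrite /= -Hthetab -Htheta.
  rewrite (Tup_Tdown hB hR (lmul_imT Ups_t v) Ups0).
  by apply/ffunP=> x; rewrite !ffunE scalerAl.
have [theta_bij thetab_bij thetabE] := lfun_scaled_inverse (expf_neq0 m.+2 q0) thetabK.
exists theta, thetab; split=> // v; first by rewrite Rdown_Tdown.
by rewrite Rup_Tup.
Qed.
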